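(* For every $k\ge0$ and every $j\in\{1,\dots,d\}$, the assignment $e_{(\gamma_1,\dots,\gamma_k)}\mapsto e_{(\gamma_1,\dots,\gamma_k,j)}$, $(\gamma_1,\dots,\gamma_k)\in\Lambda_k$, extends to a well-defined linear isometric embedding $J\colon\mathcal F_k\to\mathcal F_{k+1}$; equivalently, for all $\beta,\gamma\in\Lambda_k$, \[ (e_{(\beta_1,\dots,\beta_k,j)},e_{(\gamma_1,\dots,\gamma_k,j)})_{\mathcal F}=(e_\beta,e_\gamma)_{\mathcal F}. \]
   Context: Fix $d\ge 2$ and complex numbers $q_{ij}$, $1\le i\ne j\le d$, with $|q_{ij}|<1$ and $q_{ij}=\overline{q_{ji}}$. Let $W$ be the universal $C^*$-algebra generated by $s_1,\dots,s_d$ subject to $s_i^*s_i=I$ and $s_i^*s_j=q_{ij}s_js_i^*$ for $i\ne j$. Let $\Lambda_m=\{1,\dots,d\}^m$ (with $\Lambda_0=\{\emptyset\}$), $\Lambda^0=\bigcup_m\Lambda_m$; for finite $\alpha$, $s_\alpha=s_{\alpha_1}\cdots s_{\alpha_m}$, $s_\emptyset=I$. The Fock representation $\pi_F$ of $W$ acts on a Hilbert space $\mathcal F$ with unit vector $\Omega$ such that $\pi_F(s_j)^*\Omega=0$ for all $j$ and the vectors $e_\alpha=\pi_F(s_\alpha)\Omega$, $\alpha\in\Lambda^0$, span a dense subspace; $\mathcal F_k=\mathrm{span}\{e_\alpha:\alpha\in\Lambda_k\}$. *)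

From HB Require Import structures.
From mathcomp Require Import all_boot all_order all_algebra.
From mathcomp Require Import reals.
From mathcomp Require Import complex.
Set Implicit Arguments.
Unset Strict Implicit.
Unset Printing Implicit Defensive.
Import Order.TTheory GRing.Theory Num.Theory.
Local Open Scope ring_scope.

Section Fock.
Variable R : realType.
Local Notation C := (complex R).
Variable V : lmodType C.

Definition is_inner_product (ip : V -> V -> C) : Prop :=
  [/\ forall (a : C) (x y z : V), ip (a *: x + y) z = a * ip x z + ip y z,
      forall x y : V, ip y x = Num.conj (ip x y),
      forall x : V, 0 <= ip x x
    & forall x : V, ip x x = 0 -> x = 0].

Definition dist2 (ip : V -> V -> C) (x y : V) : C := ip (x - y) (x - y).

Definition ip_complete (ip : V -> V -> C) : Prop :=
  forall u : nat -> V,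
    (forall eps : C, 0 < eps -> exists N, forall m n, (N <= m)%N -> (N <= n)%N ->
        dist2 ip (u m) (u n) < eps) ->
    exists x : V, forall eps : C, 0 < eps -> exists N, forall n, (N <= n)%N ->
        dist2 ip (u n) x < eps.

Definition word_apply (d : nat) (s : 'I_d -> V -> V) (alpha : seq 'I_d) (v : V) : V :=
  foldr (fun i w => s i w) v alpha.

(* Density of span { e_alpha = s_alpha Omega : alpha finite word }. *)
Definition span_dense (ip : V -> V -> C) (d : nat) (s : 'I_d -> V -> V) (Omega : V) : Prop :=
  forall (x : V) (eps : C), 0 < eps ->
    exists (n : nat) (c : 'I_n -> C) (alpha : 'I_n -> seq 'I_d),
      dist2 ip x (\sum_(i < n) c i *: word_apply s (alpha i) Omega) < eps.

(* (V, ip, s, sstar, Omega) is the Fock representation of W(q):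
   s i are the images of the generators, sstar i their adjoints. *)
Definition is_Fock_rep (ip : V -> V -> C) (d : nat) (q : 'I_d -> 'I_d -> C)
    (s sstar : 'I_d -> V -> V) (Omega : V) : Prop :=
  [/\ is_inner_product ip, ip_complete ip, span_dense ip s Omega,
      (forall i, linear (s i)) /\ (forall i, linear (sstar i))
    & (forall i x y, ip (s i x) y = ip x (sstar i y))] /\
  [/\ (forall i x, sstar i (s i x) = x),
      (forall i j, i != j -> forall x, sstar i (s j x) = q i j *: s j (sstar i x)),
      ip Omega Omega = 1
    & (forall j, sstar j Omega = 0)].

End Fock.

From HB Require Import structures.
From mathcomp Require Import all_boot all_order all_algebra.
From mathcomp Require Import reals.
From mathcomp Require Import complex.
Set Implicit Arguments.
Unset Strict Implicit.
Unset Printing Implicit Defensive.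
Import Order.TTheory GRing.Theory Num.Theory.
Local Open Scope ring_scope.

(* Induction on beta: move the first letter a of beta to the right as s_a^*.
   The relations s_a^* s_b = q_ab s_b s_a^* (a != b) and s_a^* s_a = I carry
   s_a^* through gamma up to its first a, which cancels with the same scalar on
   both sides.  If a does not occur in gamma, s_a^* reaches Omega and kills the
   right-hand side; on the left it either kills s_j Omega (a != j) or, for
   a = j, leaves a pairing of a word containing j with one that does not, and
   such pairings vanish by the same mechanism. *)

Section FockWords.
Variable R : realType.
Local Notation C := (complex R).
Variable V : lmodType C.
Variable d : nat.
Variable q : 'I_d -> 'I_d -> C.
Variable ip : V -> V -> C.
Variables s sstar : 'I_d -> V -> V.
Variable Omega : V.
Hypothesis ip_inner : is_inner_product ip.
Hypothesis s_linear : forall i, linear (s i).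
Hypothesis s_adjoint : forall i x y, ip (s i x) y = ip x (sstar i y).
Hypothesis sstar_sK : forall i x, sstar i (s i x) = x.
Hypothesis sstar_s_commute :
  forall i j, i != j -> forall x, sstar i (s j x) = q i j *: s j (sstar i x).
Hypothesis sstar_Omega : forall j, sstar j Omega = 0.

Local Notation wa := (word_apply s).

Lemma word_apply_cons a g v : wa (a :: g) v = s a (wa g v).
Proof. by []. Qed.

Lemma word_apply_rcons g j v : wa (rcons g j) v = wa g (s j v).
Proof. exact: foldr_rcons. Qed.

Lemma s0 i : s i 0 = 0.
Proof.
have := s_linear i (-1) 0 0; rewrite scaler0 addr0 => ->.
by rewrite scaleN1r addNr.
Qed.

Lemma sZ i a x : s i (a *: x) = a *: s i x.
Proof. by have := s_linear i a x 0; rewrite !addr0 s0 addr0. Qed.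

Lemma word_apply0 g : wa g 0 = 0.
Proof. by elim: g => // a g IH; rewrite word_apply_cons IH s0. Qed.

Lemma word_applyZ g a x : wa g (a *: x) = a *: wa g x.
Proof. by elim: g => // b g IH; rewrite !word_apply_cons IH sZ. Qed.

Lemma ip0l x : ip 0 x = 0.
Proof.
case: ip_inner => ipDl _ _ _.
by have := ipDl (-1) 0 0 x; rewrite scaler0 addr0 mulN1r addNr.
Qed.

Lemma ipZl a x y : ip (a *: x) y = a * ip x y.
Proof.
case: ip_inner => ipDl _ _ _.
by have := ipDl a x 0 y; rewrite addr0 ip0l addr0.
Qed.

Lemma ipZr a x y : ip x (a *: y) = Num.conj a * ip x y.
Proof. by case: ip_inner => _ ip_conj _ _; rewrite ip_conj ipZl rmorphM /= -ip_conj. Qed.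

Lemma ip0r x : ip x 0 = 0.
Proof. by rewrite -(scale0r (0 : V)) ipZr rmorph0 mul0r. Qed.

Lemma ip_word_apply_cons a g x y : ip (wa (a :: g) x) y = ip (wa g x) (sstar a y).
Proof. exact: s_adjoint. Qed.

(* The scalar picked up by s_i^* on its way through g, up to the first i of g. *)
Fixpoint sstar_coef (i : 'I_d) (g : seq 'I_d) : C :=
  if g is a :: g' then (if a == i then 1 else q i a * sstar_coef i g') else 1.

Lemma sstar_word_apply_mem i g y :
  i \in g -> sstar i (wa g y) = sstar_coef i g *: wa (rem i g) y.
Proof.
elim: g => // a g IH; rewrite inE word_apply_cons /=.
have [->|ne_ai] /= := eqVneq a i; first by rewrite scale1r sstar_sK.
rewrite eq_sym in ne_ai => gi.
by rewrite sstar_s_commute // IH // sZ scalerA.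
Qed.

Lemma sstar_word_apply_notin i g y :
  i \notin g -> sstar i (wa g y) = sstar_coef i g *: wa g (sstar i y).
Proof.
elim: g => [|a g IH]; first by rewrite scale1r.
rewrite inE negb_or => /andP[ne_ia gi].
by rewrite !word_apply_cons sstar_s_commute // IH // sZ scalerA /= eq_sym (negbTE ne_ia).
Qed.

Lemma ip_word_apply_Omega_letter_eq0 i a g :
  i \in a -> i \notin g -> ip (wa a Omega) (wa g Omega) = 0.
Proof.
elim: a g => //= b a IH g; rewrite inE ip_word_apply_cons => ai gi.
have [bg|bNg] := boolP (b \in g); last first.
  by rewrite sstar_word_apply_notin // sstar_Omega word_apply0 scaler0 ip0r.
rewrite sstar_word_apply_mem // ipZr (IH (rem b g)) ?mulr0 //.
- by case/orP: ai => // /eqP ib; rewrite ib bg in gi.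
- by apply: contra gi; apply: mem_rem.
Qed.

Lemma ip_word_apply_s_Omega j b g : size b = size g ->
  ip (wa b (s j Omega)) (wa g (s j Omega)) = ip (wa b Omega) (wa g Omega).
Proof.
elim: b g => [|a b IH] g /=.
  by move/esym/size0nil => ->; rewrite s_adjoint sstar_sK.
move=> size_bg; rewrite !ip_word_apply_cons.
have [ag|aNg] := boolP (a \in g).
  by rewrite !sstar_word_apply_mem // !ipZr IH // size_rem // -size_bg.
rewrite [in RHS]sstar_word_apply_notin // sstar_Omega word_apply0 scaler0 ip0r.
rewrite sstar_word_apply_notin // ipZr.
have [<-|ne_aj] := eqVneq a j.
  rewrite sstar_sK -word_apply_rcons.
  by rewrite (@ip_word_apply_Omega_letter_eq0 a) ?mulr0 ?mem_rcons ?mem_head.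
by rewrite sstar_s_commute // sstar_Omega s0 scaler0 word_apply0 ip0r mulr0.
Qed.

End FockWords.

Theorem mainTheorem2 (R : realType) (d : nat) (hd : (2 <= d)%N)
    (q : 'I_d -> 'I_d -> complex R)
    (hq_norm : forall i j, i != j -> `|q i j| < 1)
    (hq_conj : forall i j, i != j -> q i j = Num.conj (q j i))
    (V : lmodType (complex R)) (ip : V -> V -> complex R)
    (s sstar : 'I_d -> V -> V) (Omega : V)
    (hF : is_Fock_rep ip q s sstar Omega) :
  forall (k : nat) (j : 'I_d) (beta gamma : seq 'I_d),
    size beta = k -> size gamma = k ->
    ip (word_apply s (rcons beta j) Omega) (word_apply s (rcons gamma j) Omega)
    = ip (word_apply s beta Omega) (word_apply s gamma Omega).
Proof.
move=> k j beta gamma size_beta size_gamma.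
case: hF => [[ip_inner _ _ [s_linear _] s_adjoint] [sstar_sK sstar_s_commute _ sstar_Omega]].
rewrite !word_apply_rcons.
have size_eq : size beta = size gamma by rewrite size_beta size_gamma.
exact: (ip_word_apply_s_Omega ip_inner s_linear s_adjoint sstar_sK sstar_s_commute
  sstar_Omega j size_eq).
Qed.
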